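(* Let $\sigma$ be a signature containing $\triangleright$ and let $\mathcal{A}$ be a $\sigma$-algebra that is representable by partial functions. Then for every $a \in \mathcal{A}$, the set ${\downarrow}a = \{b \in \mathcal{A} : b \le a\}$, with least element $0$, greatest element $a$, meet given by $\lhd$ and complementation given by $\overline{b} := b \triangleright a$, is a Boolean algebra. Any representation $\theta$ of $\mathcal{A}$ by partial functions restricts to a representation of the Boolean algebra ${\downarrow}a$ as a field of sets over $\theta(a)$ (i.e. $\theta$ maps ${\downarrow}a$ injectively to subsets of $\theta(a)$, sending $\lhd$ to $\cap$, complement to complement relative to $\theta(a)$, $0$ to $\emptyset$ and $a$ to $\theta(a)$). Moreover, this restricted representation of ${\downarrow}a$ is complete (i.e. preserves all existing meets of nonempty subsets as intersections and all existing joins as unions) if either (1) $\theta$ is a meet-complete representation of $\mathcal{A}$, or (2) $\sigma$ contains $\wedge$ and $\theta$ is a join-complete representation of $\mathcal{A}$.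
   Context: Signatures $\sigma$ are sets of operation symbols drawn from: $\triangleright$ (antidomain restriction, binary), $;$ (composition, binary), $\wedge$ (intersection, binary), $\mathrm{upd}$ (update, binary), $\sqcup$ (preferential union, binary), $\mathsf{D}$ (domain, unary), $\mathsf{A}$ (antidomain, unary). An algebra of partial functions of signature $\sigma$ is a $\sigma$-algebra whose elements are partial functions on a set $X$ (the union of all their domains and ranges), with operations: $f \triangleright g = \{(x,y) \in g : x \notin \mathrm{dom}(f)\}$; $f ; g = \{(x,z) : \exists y\,((x,y)\in f, (y,z) \in g)\}$; $f \wedge g = f \cap g$; $\mathrm{upd}(f,g)(x)$ equals $f(x)$ if $f(x)$ is defined and $g(x)$ undefined, equals $g(x)$ if both are defined, and is undefined otherwise; $(f \sqcup g)(x)$ equals $f(x)$ if defined, else $g(x)$ if defined, else undefined; $\mathsf{D}(f)$ is the identity on $\mathrm{dom}(f)$; $\mathsf{A}(f)$ is the identity on $X \setminus \mathrm{dom}(f)$. A representation of a $\sigma$-algebra $\mathcal{A}$ by partial functions is an isomorphism from $\mathcal{A}$ onto an algebra of partial functions of signature $\sigma$; $\mathcal{A}$ is representable if one exists. In any algebra with $\triangleright$, define $0 := a \triangleright a$ and $a \lhd b := (a \triangleright b) \triangleright b$ (in partial functions: restriction of $b$ to $\mathrm{dom}(a)$), and $a \le b :\iff a \lhd b = a$. For representable algebras $\le$ is a partial order with least element $0$, and every representation $\theta$ satisfies $a \le b \iff \theta(a) \subseteq \theta(b)$. A representation $\theta$ is join complete if for every subset $S$ for which $\bigvee S$ exists,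 $\theta(\bigvee S) = \bigcup \theta[S]$; it is meet complete if for every nonempty subset $S$ for which $\bigwedge S$ exists, $\theta(\bigwedge S) = \bigcap \theta[S]$. *)

Inductive sym : Type :=
  | SAres
  | SComp
  | SMeet
  | SUpd
  | SPref
  | SDom
  | SAdom.

Definition signature := sym -> Prop.

(** An algebra carrying an interpretation of every symbol; for a
    sigma-algebra only the operations whose symbols lie in sigma matter
    (the others are arbitrary and never constrained). *)
Record alg : Type := {
  car : Type;
  o_ares : car -> car -> car;
  o_comp : car -> car -> car;
  o_meet : car -> car -> car;
  o_upd  : car -> car -> car;
  o_pref : car -> car -> car;
  o_dom  : car -> car;
  o_adom : car -> car
}.

(** Partial functions on X, as functional binary relations. *)
Definition rel (X : Type) := X -> X -> Prop.
Definition functional {X : Type} (f : rel X) : Prop :=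
  forall x y z, f x y -> f x z -> y = z.
Definition releq {X : Type} (f g : rel X) : Prop := forall x y, f x y <-> g x y.
Definition subrel {X : Type} (f g : rel X) : Prop := forall x y, f x y -> g x y.
Definition rdom {X : Type} (f : rel X) (x : X) : Prop := exists y, f x y.

Definition r_ares {X} (f g : rel X) : rel X := fun x y => g x y /\ ~ rdom f x.
Definition r_comp {X} (f g : rel X) : rel X := fun x z => exists y, f x y /\ g y z.
Definition r_meet {X} (f g : rel X) : rel X := fun x y => f x y /\ g x y.
Definition r_upd {X} (f g : rel X) : rel X :=
  fun x y => (f x y /\ ~ rdom g x) \/ (rdom f x /\ g x y).
Definition r_pref {X} (f g : rel X) : rel X :=
  fun x y => f x y \/ (~ rdom f x /\ g x y).
Definition r_dom {X} (f : rel X) : rel X := fun x y => x = y /\ rdom f x.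
(* antidomain relative to the base set X (the whole type X; the
   representation below requires X to be the union of all domains and
   ranges of represented elements) *)
Definition r_adom {X} (f : rel X) : rel X := fun x y => x = y /\ ~ rdom f x.

Definition is_rep (sigma : signature) (A : alg) (X : Type)
    (th : car A -> rel X) : Prop :=
  (forall a, functional (th a)) /\
  (forall x : X, exists a, (exists y, th a x y) \/ (exists y, th a y x)) /\
  (forall a b, releq (th a) (th b) -> a = b) /\
  (sigma SAres -> forall a b, releq (th (o_ares A a b)) (r_ares (th a) (th b))) /\
  (sigma SComp -> forall a b, releq (th (o_comp A a b)) (r_comp (th a) (th b))) /\
  (sigma SMeet -> forall a b, releq (th (o_meet A a b)) (r_meet (th a) (th b))) /\
  (sigma SUpd  -> forall a b, releq (th (o_upd A a b))  (r_upd (th a) (th b))) /\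
  (sigma SPref -> forall a b, releq (th (o_pref A a b)) (r_pref (th a) (th b))) /\
  (sigma SDom  -> forall a, releq (th (o_dom A a)) (r_dom (th a))) /\
  (sigma SAdom -> forall a, releq (th (o_adom A a)) (r_adom (th a))).

Definition representable (sigma : signature) (A : alg) : Prop :=
  exists (X : Type) (th : car A -> rel X), is_rep sigma A X th.

Definition zero (A : alg) (a : car A) : car A := o_ares A a a.
Definition restr (A : alg) (a b : car A) : car A := o_ares A (o_ares A a b) b.
Definition le (A : alg) (a b : car A) : Prop := restr A a b = a.
Definition down (A : alg) (a : car A) : car A -> Prop := fun b => le A b a.

Definition is_lub (A : alg) (D S : car A -> Prop) (j : car A) : Prop :=
  D j /\ (forall s, S s -> le A s j) /\
  (forall u, D u -> (forall s, S s -> le A s u) -> le A j u).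
Definition is_glb (A : alg) (D S : car A -> Prop) (m : car A) : Prop :=
  D m /\ (forall s, S s -> le A m s) /\
  (forall u, D u -> (forall s, S s -> le A u s) -> le A u m).

Definition runion {X} {T} (th : T -> rel X) (S : T -> Prop) : rel X :=
  fun x y => exists s, S s /\ th s x y.
Definition rinter {X} {T} (th : T -> rel X) (S : T -> Prop) : rel X :=
  fun x y => forall s, S s -> th s x y.

Definition allA (A : alg) : car A -> Prop := fun _ => True.

Definition join_complete (A : alg) {X} (th : car A -> rel X) : Prop :=
  forall S j, is_lub A (allA A) S j -> releq (th j) (runion th S).
Definition meet_complete (A : alg) {X} (th : car A -> rel X) : Prop :=
  forall S m, (exists s, S s) -> is_glb A (allA A) S m ->
    releq (th m) (rinter th S).

Definition boolean_algebra {T : Type} (D : T -> Prop) (z o : T)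
    (m : T -> T -> T) (c : T -> T) : Prop :=
  let j := fun x y => c (m (c x) (c y)) in
  D z /\ D o /\ (forall x y, D x -> D y -> D (m x y)) /\
  (forall x, D x -> D (c x)) /\
  forall x y w, D x -> D y -> D w ->
    m x (m y w) = m (m x y) w /\ j x (j y w) = j (j x y) w /\
    m x y = m y x /\ j x y = j y x /\
    m x (j x y) = x /\ j x (m x y) = x /\
    j x z = x /\ m x o = x /\
    m x (j y w) = j (m x y) (m x w) /\ j x (m y w) = m (j x y) (j x w) /\
    j x (c x) = o /\ m x (c x) = z.

Definition field_of_sets_rep (A : alg) (a : car A) {X} (th : car A -> rel X) : Prop :=
  (forall b, down A a b -> subrel (th b) (th a)) /\
  (forall b c, down A a b -> down A a c -> releq (th b) (th c) -> b = c) /\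
  (forall b c, down A a b -> down A a c ->
     releq (th (restr A b c)) (fun x y => th b x y /\ th c x y)) /\
  (forall b, down A a b ->
     releq (th (o_ares A b a)) (fun x y => th a x y /\ ~ th b x y)) /\
  releq (th (zero A a)) (fun _ _ => False) /\
  releq (th a) (th a).

Definition complete_on_down (A : alg) (a : car A) {X} (th : car A -> rel X) : Prop :=
  (forall S, (forall s, S s -> down A a s) ->
     forall j, is_lub A (down A a) S j -> releq (th j) (runion th S)) /\
  (forall S, (forall s, S s -> down A a s) -> (exists s, S s) ->
     forall m, is_glb A (down A a) S m -> releq (th m) (rinter th S)).

From Stdlib Require Import Classical Setoid.

(* The proof rests on three facts.
   (i) The order b <= c of A is inclusion th b ⊆ th c, since th (b <| c) is
       th c restricted to the domain of th b.
   (ii) An element b below a is th a restricted to dom (th b), so elements of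
       the downset of a are determined by their domains, and the operations
       0, a, <| and b |-> b |> a act on domains as the empty set, dom (th a),
       intersection and relative complement.  Every Boolean algebra axiom thus
       reduces to a propositional tautology about domains, and the field of
       sets representation is read off directly.
   (iii) The complement b |-> b |> a is an order-reversing involution of the
       downset, so it exchanges least upper bounds and greatest lower bounds
       there.  Meets in the downset of nonempty families are meets in A, and
       so are joins when sigma contains the intersection.  Hence a
       meet-complete th also preserves joins (via complements), and a
       join-complete th preserves meets (via complements). *)

Section RepresentedDownset.

Variables (sigma : signature) (A : alg) (X : Type) (th : car A -> rel X).
Hypothesis rep : is_rep sigma A X th.
Hypothesis has_ares : sigma SAres.

Lemma rep_functional b : functional (th b).
Proof. apply rep. Qed.

Lemma rep_injective b c : releq (th b) (th c) -> b = c.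
Proof. apply rep. Qed.

Lemma rep_ares b c x y : th (o_ares A b c) x y <-> th c x y /\ ~ rdom (th b) x.
Proof. destruct rep as (_ & _ & _ & Hares & _). apply (Hares has_ares). Qed.

Lemma rep_ares_dom b c x :
  rdom (th (o_ares A b c)) x <-> rdom (th c) x /\ ~ rdom (th b) x.
Proof.
  split.
  - intros [y Hy]. apply rep_ares in Hy as [Hc Hb]. split; [exists y |]; assumption.
  - intros [[y Hy] Hb]. exists y. apply rep_ares. split; assumption.
Qed.

Lemma rep_restr b c x y : th (restr A b c) x y <-> th c x y /\ rdom (th b) x.
Proof.
  unfold restr. rewrite rep_ares, rep_ares_dom.
  split; intros [Hc Hb]; split; try assumption.
  - apply NNPP. intro Hnb. apply Hb. split; [exists y |]; assumption.
  - intros [_ Hnb]. contradiction.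
Qed.

Lemma rep_restr_dom b c x :
  rdom (th (restr A b c)) x <-> rdom (th c) x /\ rdom (th b) x.
Proof.
  split.
  - intros [y Hy]. apply rep_restr in Hy as [Hc Hb]. split; [exists y |]; assumption.
  - intros [[y Hy] Hb]. exists y. apply rep_restr. split; assumption.
Qed.

Lemma le_subrel b c : le A b c <-> subrel (th b) (th c).
Proof.
  unfold le. split.
  - intros Hbc x y Hb. rewrite <- Hbc in Hb. apply rep_restr in Hb. apply Hb.
  - intros Hsub. apply rep_injective. intros x y. rewrite rep_restr. split.
    + intros [Hc [z Hz]].
      replace y with z by (apply (rep_functional c x); auto using Hsub).
      exact Hz.
    + intros Hb. split; [apply Hsub | exists y]; exact Hb.
Qed.

Lemma le_transitive b c d : le A b c -> le A c d -> le A b d.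
Proof. rewrite !le_subrel. intros Hbc Hcd x y H. auto. Qed.

Variable a : car A.

Lemma down_rep b x y : down A a b -> (th b x y <-> th a x y /\ rdom (th b) x).
Proof.
  unfold down. rewrite le_subrel. intros Hba. split.
  - intros Hb. split; [apply Hba | exists y]; exact Hb.
  - intros [Ha [z Hz]].
    replace y with z by (apply (rep_functional a x); auto). exact Hz.
Qed.

Lemma down_dom_incl b x : down A a b -> rdom (th b) x -> rdom (th a) x.
Proof. unfold down. rewrite le_subrel. intros Hba [y Hy]. exists y. auto. Qed.

Lemma down_eq_dom b c : down A a b -> down A a c ->
  (forall x, rdom (th b) x <-> rdom (th c) x) -> b = c.
Proof.
  intros Hb Hc Hdom. apply rep_injective. intros x y.
  rewrite (down_rep b), (down_rep c), Hdom by assumption. reflexivity.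
Qed.

Lemma down_top : down A a a.
Proof. unfold down. rewrite le_subrel. intros x y H. exact H. Qed.

Lemma down_compl b : down A a (o_ares A b a).
Proof. unfold down. rewrite le_subrel. intros x y H. apply rep_ares in H. apply H. Qed.

Lemma down_restr b c : down A a c -> down A a (restr A b c).
Proof.
  unfold down. rewrite !le_subrel. intros Hca x y H. apply rep_restr in H. apply Hca, H.
Qed.

Lemma rep_compl b x y : down A a b ->
  (th (o_ares A b a) x y <-> th a x y /\ ~ th b x y).
Proof.
  intros Hb. rewrite rep_ares. split; intros [Ha Hnb]; split; try exact Ha.
  - intros H. apply Hnb. exists y. exact H.
  - intros Hd. apply Hnb. apply (down_rep b); auto.
Qed.

Lemma rep_zero x y : ~ th (zero A a) x y.
Proof. unfold zero. rewrite rep_ares. intros [Ha Hna]. apply Hna. exists y. exact Ha. Qed.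

Ltac down_closed :=
  unfold zero; repeat first [ apply down_top | apply down_compl | apply down_restr
                            | assumption ].

(* Excluded middle for every domain atom of the goal, so that tauto can
   decide the classical tautology it faces. *)
Ltac classical_atoms :=
  repeat match goal with |- context [rdom ?f ?x] =>
    lazymatch goal with
    | _ : rdom f x \/ ~ rdom f x |- _ => fail
    | _ => pose proof (classic (rdom f x))
    end end.

(* An equation between elements below a, proved by comparing domains. *)
Ltac by_domains :=
  apply down_eq_dom; [down_closed | down_closed |];
  let p := fresh "p" in intro p;
  repeat first [ rewrite rep_restr_dom | rewrite rep_ares_dom ];
  repeat match goal with H : down A a ?b |- _ =>
    pose proof (down_dom_incl b p H); clear H end;
  classical_atoms; tauto.

Lemma down_boolean_algebra :
  boolean_algebra (down A a) (zero A a) a (restr A) (fun b => o_ares A b a).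
Proof.
  unfold boolean_algebra, zero. cbv zeta.
  split; [down_closed |]. split; [down_closed |].
  split; [intros; down_closed |]. split; [intros; down_closed |].
  intros x y w Hx Hy Hw. repeat split; by_domains.
Qed.

Lemma down_field_of_sets : field_of_sets_rep A a th.
Proof.
  split; [| split; [| split; [| split; [| split]]]].
  - intros b Hb. apply le_subrel, Hb.
  - intros b c _ _. apply rep_injective.
  - intros b c Hb Hc x y. rewrite rep_restr, (down_rep b x y Hb), (down_rep c x y Hc).
    tauto.
  - intros b Hb x y. apply (rep_compl b x y Hb).
  - intros x y. split; [apply rep_zero | intros []].
  - intros x y. reflexivity.
Qed.

Lemma compl_involutive b : down A a b -> o_ares A (o_ares A b a) a = b.
Proof. intros Hb. by_domains. Qed.

Lemma compl_antitone b c : le A b c -> le A (o_ares A c a) (o_ares A b a).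
Proof.
  rewrite !le_subrel. intros Hbc x y. rewrite !rep_ares. intros [Ha Hnc].
  split; [exact Ha |]. intros [z Hz]. apply Hnc. exists z. auto.
Qed.

Lemma compl_reflect b c : down A a b -> down A a c ->
  le A (o_ares A c a) (o_ares A b a) -> le A b c.
Proof.
  intros Hb Hc H. rewrite <- (compl_involutive b Hb), <- (compl_involutive c Hc).
  apply compl_antitone, H.
Qed.

Definition compl_image (S : car A -> Prop) : car A -> Prop :=
  fun t => exists s, S s /\ t = o_ares A s a.

Lemma compl_image_down S t : compl_image S t -> down A a t.
Proof. intros [s [_ ->]]. apply down_compl. Qed.

Lemma compl_image_inhabited S : (exists s, S s) -> exists t, compl_image S t.
Proof. intros [s Hs]. exists (o_ares A s a), s. split; [exact Hs | reflexivity]. Qed.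

Lemma lub_compl_glb S j : (forall s, S s -> down A a s) ->
  is_lub A (down A a) S j -> is_glb A (down A a) (compl_image S) (o_ares A j a).
Proof.
  intros HS [Hj [Hupper Hleast]]. split; [apply down_compl | split].
  - intros t [s [Hs ->]]. apply compl_antitone, Hupper, Hs.
  - intros u Hu Hlower. apply compl_reflect; [exact Hu | apply down_compl |].
    rewrite (compl_involutive j Hj). apply Hleast; [apply down_compl |].
    intros s Hs. apply compl_reflect; [apply HS, Hs | apply down_compl |].
    rewrite (compl_involutive u Hu). apply Hlower. exists s. auto.
Qed.

Lemma glb_compl_lub S m : (forall s, S s -> down A a s) ->
  is_glb A (down A a) S m -> is_lub A (down A a) (compl_image S) (o_ares A m a).
Proof.
  intros HS [Hm [Hlower Hgreatest]]. split; [apply down_compl | split].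
  - intros t [s [Hs ->]]. apply compl_antitone, Hlower, Hs.
  - intros u Hu Hupper. apply compl_reflect; [apply down_compl | exact Hu |].
    rewrite (compl_involutive m Hm). apply Hgreatest; [apply down_compl |].
    intros s Hs. apply compl_reflect; [apply down_compl | apply HS, Hs |].
    rewrite (compl_involutive u Hu). apply Hupper. exists s. auto.
Qed.

Lemma glb_down_glb_all S m : (exists s, S s) -> (forall s, S s -> down A a s) ->
  is_glb A (down A a) S m -> is_glb A (allA A) S m.
Proof.
  intros [s0 Hs0] HS [_ [Hlower Hgreatest]]. split; [exact I | split; [exact Hlower |]].
  intros u _ Hu. apply Hgreatest; [| exact Hu].
  apply le_transitive with s0; [apply Hu | apply HS]; exact Hs0.
Qed.

(* With intersection available, a join in the downset is a join in A: an
   upper bound u of S can be cut down to u ∧ a. *)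
Lemma lub_down_lub_all (has_meet : sigma SMeet) S j :
  (forall s, S s -> down A a s) -> is_lub A (down A a) S j -> is_lub A (allA A) S j.
Proof.
  destruct rep as (_ & _ & _ & _ & _ & Hmeet & _).
  pose proof (Hmeet has_meet) as rep_meet.
  intros HS [_ [Hupper Hleast]]. split; [exact I | split; [exact Hupper |]].
  intros u _ Hu. apply le_transitive with (o_meet A u a).
  - apply Hleast.
    + unfold down. apply le_subrel. intros x y H. apply rep_meet in H. apply H.
    + intros s Hs. apply le_subrel. intros x y H. apply rep_meet. split.
      * apply le_subrel with s; [apply Hu |]; assumption.
      * apply le_subrel with s; [apply HS |]; assumption.
  - apply le_subrel. intros x y H. apply rep_meet in H. apply H.
Qed.

(* The empty join in the downset is 0, represented by the empty function. *)
Lemma rep_lub_empty S j : ~ (exists s, S s) ->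
  is_lub A (down A a) S j -> releq (th j) (runion th S).
Proof.
  intros Hempty [_ [_ Hleast]].
  assert (Hj0 : le A j (zero A a)).
  { apply Hleast; [down_closed |]. intros s Hs. exfalso. apply Hempty. exists s. exact Hs. }
  intros x y. split.
  - intros H. exfalso. apply (rep_zero x y). apply le_subrel with j; assumption.
  - intros [s [Hs _]]. exfalso. apply Hempty. exists s. exact Hs.
Qed.

Lemma rep_union_by_compl S j : (forall s, S s -> down A a s) ->
  is_lub A (down A a) S j ->
  releq (th (o_ares A j a)) (rinter th (compl_image S)) -> releq (th j) (runion th S).
Proof.
  intros HS [Hj [Hupper _]] Hinter x y. split.
  - intros Hjxy. assert (Ha : th a x y) by (apply (down_rep j x y Hj), Hjxy).
    assert (Hout : ~ rinter th (compl_image S) x y).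
    { intros H. apply Hinter, (rep_compl j x y Hj) in H. tauto. }
    apply NNPP. intros Hnot. apply Hout. intros t [s [Hs ->]].
    apply (rep_compl s x y (HS s Hs)). split; [exact Ha |].
    intros Hsxy. apply Hnot. exists s. split; assumption.
  - intros [s [Hs Hsxy]]. apply le_subrel with s; [apply Hupper |]; assumption.
Qed.

Lemma rep_inter_by_compl S m : (exists s, S s) -> (forall s, S s -> down A a s) ->
  is_glb A (down A a) S m ->
  releq (th (o_ares A m a)) (runion th (compl_image S)) -> releq (th m) (rinter th S).
Proof.
  intros [s0 Hs0] HS [Hm [Hlower _]] Hunion x y. split.
  - intros Hmxy s Hs. apply le_subrel with m; [apply Hlower |]; assumption.
  - intros Hall. apply NNPP. intros Hnm.
    assert (Ha : th a x y) by (apply le_subrel with s0; [apply HS | apply Hall]; exact Hs0).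
    assert (Hc : th (o_ares A m a) x y) by (apply (rep_compl m x y Hm); auto).
    apply Hunion in Hc as [t [[s [Hs ->]] Ht]].
    apply (rep_compl s x y (HS s Hs)) in Ht. apply Ht, Hall, Hs.
Qed.

Lemma down_complete_of_meet_complete :
  meet_complete A th -> complete_on_down A a th.
Proof.
  intros Hmc. split.
  - intros S HS j Hj. destruct (classic (exists s, S s)) as [Hne | Hempty].
    + apply rep_union_by_compl; [exact HS | exact Hj |].
      apply Hmc; [apply compl_image_inhabited, Hne |].
      apply glb_down_glb_all; [apply compl_image_inhabited, Hne | apply compl_image_down |].
      apply lub_compl_glb; assumption.
    + apply rep_lub_empty; assumption.
  - intros S HS Hne m Hm. apply Hmc; [exact Hne |]. apply glb_down_glb_all; assumption.
Qed.

Lemma down_complete_of_join_complete (has_meet : sigma SMeet) :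
  join_complete A th -> complete_on_down A a th.
Proof.
  intros Hjc. split.
  - intros S HS j Hj. apply Hjc. apply lub_down_lub_all; assumption.
  - intros S HS Hne m Hm. apply rep_inter_by_compl; try assumption.
    apply Hjc. apply lub_down_lub_all; [exact has_meet | apply compl_image_down |].
    apply glb_compl_lub; assumption.
Qed.

End RepresentedDownset.

Theorem lemma3p3 (sigma : signature) (A : alg) :
  sigma SAres -> representable sigma A ->
  forall a : car A,
    boolean_algebra (down A a) (zero A a) a (restr A) (fun b => o_ares A b a) /\
    (forall (X : Type) (th : car A -> rel X), is_rep sigma A X th ->
       field_of_sets_rep A a th /\
       ((meet_complete A th \/ (sigma SMeet /\ join_complete A th)) ->
          complete_on_down A a th)).
Proof.
  intros has_ares [X0 [th0 rep0]] a. split.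
  - exact (down_boolean_algebra sigma A X0 th0 rep0 has_ares a).
  - intros X th rep. split.
    + exact (down_field_of_sets sigma A X th rep has_ares a).
    + intros [Hmc | [has_meet Hjc]].
      * exact (down_complete_of_meet_complete sigma A X th rep has_ares a Hmc).
      * exact (down_complete_of_join_complete sigma A X th rep has_ares a has_meet Hjc).
Qed.
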